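(* Fix $n\ge 1$ and $p\ge 1$. Let $\{A^t\}_{t\ge 0}$ be a sequence of couplings of positive integral diamonds of Dynkin type $\mathbb{A}_n$ which is a $p$-cycle ($A^{t+p}=A^t$ for all $t$), considered through its terms $A^0,\dots,A^{2p-1}$. For $0\le i\le p-1$ consider the subsequence $\{B^{s}_{(i)}\}_{0\le s\le p-1}$ with $B^{s}_{(i)}=A^{i+s}$, and its infinite array $C^{(i)}=(c^{(i)}_{r,j})_{r\in\mathbb{Z},0\le j\le n+1}$ given by $c^{(i)}_{(s+1)+kp,\,j}=a^{i+s}_{1,j}$ ($0\le s\le p-1$, $k\in\mathbb{Z}$, $1\le j\le n$) and $c^{(i)}_{r,0}=c^{(i)}_{r,n+1}=1$. Then, for all $0\le i\le p-1$, these subsequences generate the same frieze pattern of order $n+3$.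
   Context: An $\mathbb{A}_n$-diamond over an integral domain $\mathbf{R}$ is a family $A=(a_{i,j})$ of elements of $\mathbf{R}$, with $a_{1,j}$ for $1\le j\le n+1$ and $a_{2,j}$ for $0\le j\le n$, such that (D1) $a_{2,0}=a_{1,n+1}=1$ and (D2) $a_{1,j}a_{2,j}-a_{2,j-1}a_{1,j+1}=1$ for $1\le j\le n$. For $\mathbf{R}=\mathbb{Z}$, $A$ is a positive integral diamond of Dynkin type $\mathbb{A}_n$ if it also satisfies (D3): there are integers $a,m_a$ with $1\le a\le\lfloor (n+2)/2\rfloor$ such that either $(a_{1,1},a_{2,1})=(a,a+m_a)$ or $(a_{1,1},a_{2,1})=(a+m_a,a)$, and $a_{1,2}=a^2+am_a-1$, where $1\le m_1\le n$ when $a=1$ and $0\le m_a\le n+2(1-a)$ when $a>1$. $A\models B$ (coupling) means $a_{2,j}=b_{1,j}$ for $1\le j\le n$; a sequence of couplings is $\{A^t\}_{t\ge0}$ with $A^t\models A^{t+1}$ for all $t$, and we write $A^t=(a^t_{i,j})$. An array $(c_{r,j})_{r\in\mathbb{Z},0\le j\le n+1}$ with $c_{r,0}=c_{r,n+1}=1$ is a frieze pattern of order $n+3$ if $c_{r,j}c_{r+1,j}-c_{r+1,j-1}c_{r,j+1}=1$ for all $r\in\mathbb{Z}$, $1\le j\le n$ (i.e. placing $c_{r,j}$ in row $j$, column $2r+j$, bordered by rows of zeros, yields a closed Coxeter frieze pattern). Two such arrays are regarded as the same frieze pattern if one is obtained from the other by a translation of the index $r$. *)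

From HB Require Import structures.
From mathcomp Require Import all_boot all_order all_algebra.
Set Implicit Arguments. Unset Strict Implicit. Unset Printing Implicit Defensive.
Import Order.TTheory GRing.Theory Num.Theory.
Local Open Scope ring_scope.

(* A diamond over R: two rows of entries; row1 j = a_{1,j} (1 <= j <= n+1),
   row2 j = a_{2,j} (0 <= j <= n).  Values outside these ranges are ignored. *)
Record diamond (R : Type) := Diamond { row1 : nat -> R ; row2 : nat -> R }.

Definition is_diamond (R : comRingType) (n : nat) (A : diamond R) : Prop :=
  row2 A 0 = 1 /\ row1 A n.+1 = 1 /\
  (forall j : nat, (1 <= j <= n)%N ->
     row1 A j * row2 A j - row2 A j.-1 * row1 A j.+1 = 1).

Definition D3 (n : nat) (A : diamond int) : Prop :=
  exists a m : int,
    1 <= a <= ((n + 2) %/ 2)%N%:Z /\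
    ((row1 A 1%N = a /\ row2 A 1%N = a + m) \/ (row1 A 1%N = a + m /\ row2 A 1%N = a)) /\
    row1 A 2%N = a ^+ 2 + a * m - 1 /\
    (a = 1 -> 1 <= m <= n%:Z) /\
    (1 < a -> 0 <= m <= n%:Z + 2 * (1 - a)).

Definition pos_int_diamond (n : nat) (A : diamond int) : Prop :=
  is_diamond n A /\ D3 n A.

Definition couples (R : Type) (n : nat) (A B : diamond R) : Prop :=
  forall j : nat, (1 <= j <= n)%N -> row2 A j = row1 B j.

Definition diamond_eq (R : Type) (n : nat) (A B : diamond R) : Prop :=
  (forall j : nat, (1 <= j <= n.+1)%N -> row1 A j = row1 B j) /\
  (forall j : nat, (j <= n)%N -> row2 A j = row2 B j).

(* the array C^(i): c_{(s+1)+kp, j} = a^{i+s}_{1,j} (0<=s<=p-1), borders 1 *)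
Definition sub_array (n p : nat) (A : nat -> diamond int) (i : nat)
  (r : int) (j : nat) : int :=
  if (j == 0%N) || (j == n.+1) then 1
  else row1 (A (i + `|((r - 1) %% p%:Z)%Z|)%N) j.

Definition is_frieze (n : nat) (c : int -> nat -> int) : Prop :=
  (forall r : int, c r 0%N = 1 /\ c r n.+1 = 1) /\
  (forall (r : int) (j : nat), (1 <= j <= n)%N ->
     c r j * c (r + 1) j - c (r + 1) j.-1 * c r j.+1 = 1).

Definition same_frieze (n : nat) (c c' : int -> nat -> int) : Prop :=
  exists d : int, forall (r : int) (j : nat), (j <= n.+1)%N -> c r j = c' (r + d) j.

(* Row 1 of A^t depends only on t mod p, and by the coupling row 2 of A^t is
   row 1 of A^(t+1). Hence the entries c_{r+1,j} of C^(i) form row 2 of the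
   diamond whose row 1 gives the c_{r,j}, so the frieze rule is exactly (D2)
   and the borders are (D1). The c_{r,j} depend on r only through i + r mod p,
   so C^(i) and C^(i') differ by the translation r |-> r + i - i'. *)

From mathcomp Require Import all_boot all_order all_algebra.
From mathcomp Require Import ring.
(* Imported last so that [row1] is the diamond row, not the matrix [row1]. *)
Set Implicit Arguments. Unset Strict Implicit. Unset Printing Implicit Defensive.
Import Order.TTheory GRing.Theory Num.Theory.
Local Open Scope ring_scope.

Section PeriodicRows.
Variables (R : Type) (n p : nat) (A : nat -> diamond R).
Hypothesis A_periodic : forall t : nat, diamond_eq n (A (t + p)%N) (A t).

Lemma row1_addnMp t k j :
  (1 <= j <= n.+1)%N -> row1 (A (t + k * p)%N) j = row1 (A t) j.
Proof.
move=> hj; elim: k => [|k IHk]; first by rewrite mul0n addn0.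
by rewrite mulSn addnCA addnC (proj1 (A_periodic _)).
Qed.

Lemma row1_eq_mod t t' j :
  (1 <= j <= n.+1)%N -> t = t' %[mod p] -> row1 (A t) j = row1 (A t') j.
Proof.
move=> hj tt'.
by rewrite (divn_eq t p) (divn_eq t' p) tt' !(addnC _ (_ %% p)%N) !row1_addnMp.
Qed.

End PeriodicRows.

Definition sub_index (p i : nat) (r : int) : nat := (i + `|((r - 1) %% p%:Z)%Z|)%N.

Lemma eqn_mod_of_eqz (m m' d : nat) :
  (m%:Z = m'%:Z %[mod d%:Z])%Z -> m = m' %[mod d].
Proof. by rewrite !modz_nat => -[]. Qed.

Section SubIndex.
Variable p : nat.
Hypothesis p_gt0 : (0 < p)%N.

Lemma sub_index_mod i r : ((sub_index p i r)%:Z = i%:Z + r - 1 %[mod p%:Z])%Z.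
Proof.
have p_neq0 : p%:Z != 0 by rewrite eqz_nat -lt0n.
by rewrite /sub_index PoszD gez0_abs ?modz_ge0 // modzDmr addrA.
Qed.

Lemma sub_index_succ i r : sub_index p i (r + 1) = (sub_index p i r).+1 %[mod p].
Proof.
apply: eqn_mod_of_eqz; rewrite -addn1 PoszD -modzDml !sub_index_mod modzDml.
by congr (_ %% _)%Z; ring.
Qed.

Lemma sub_index_translate i i' r :
  sub_index p i r = sub_index p i' (r + (i%:Z - i'%:Z)) %[mod p].
Proof.
by apply: eqn_mod_of_eqz; rewrite !sub_index_mod; congr (_ %% _)%Z; ring.
Qed.

End SubIndex.

Section SubArray.
Variables (n p : nat) (A : nat -> diamond int).
Hypothesis p_gt0 : (0 < p)%N.
Hypothesis A_diamond : forall t : nat, is_diamond n (A t).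
Hypothesis A_couples : forall t : nat, couples n (A t) (A t.+1).
Hypothesis A_periodic : forall t : nat, diamond_eq n (A (t + p)%N) (A t).

Lemma sub_array_row1 i r j :
  (1 <= j <= n.+1)%N -> sub_array n p A i r j = row1 (A (sub_index p i r)) j.
Proof.
rewrite /sub_array; case: eqP => [-> //|_] /= _.
by case: eqP => [->|//]; have [_ [-> _]] := A_diamond (sub_index p i r).
Qed.

Lemma sub_array_succ i r j :
  (j <= n)%N -> sub_array n p A i (r + 1) j = row2 (A (sub_index p i r)) j.
Proof.
move=> le_jn; have [->|j_gt0] := posnP j.
  by have [-> _] := A_diamond (sub_index p i r).
have j_range : (1 <= j <= n)%N by rewrite j_gt0.
rewrite sub_array_row1 ?(leqW le_jn) ?andbT // A_couples //.
by apply: (row1_eq_mod A_periodic); rewrite ?sub_index_succ // j_gt0 leqW.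
Qed.

Lemma sub_array_frieze i : is_frieze n (sub_array n p A i).
Proof.
split=> [r | r j /andP[j_gt0 le_jn]].
  by rewrite /sub_array !eqxx orbT.
rewrite !sub_array_succ ?(leq_trans (leq_pred j)) //.
rewrite !sub_array_row1 ?j_gt0 ?(leqW le_jn) //.
by have [_ [_ ->]] := A_diamond (sub_index p i r); rewrite ?j_gt0.
Qed.

Lemma sub_array_translate i i' : same_frieze n (sub_array n p A i) (sub_array n p A i').
Proof.
exists (i%:Z - i'%:Z) => r j le_j.
rewrite /sub_array; case: ifP => // /norP[j_neq0 _].
apply: (row1_eq_mod A_periodic); last exact: sub_index_translate.
by rewrite lt0n j_neq0.
Qed.

End SubArray.

Theorem proposition6 (n p : nat) (A : nat -> diamond int) :
  (1 <= n)%N -> (1 <= p)%N ->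
  (forall t : nat, pos_int_diamond n (A t)) ->
  (forall t : nat, couples n (A t) (A t.+1)) ->
  (forall t : nat, diamond_eq n (A (t + p)%N) (A t)) ->
  (forall i : nat, (i < p)%N -> is_frieze n (sub_array n p A i)) /\
  (forall i i' : nat, (i < p)%N -> (i' < p)%N ->
     same_frieze n (sub_array n p A i) (sub_array n p A i')).
Proof.
move=> _ p_gt0 A_pos A_couples A_periodic.
have A_diamond t : is_diamond n (A t) by case: (A_pos t).
split=> [i _ | i i' _ _].
- exact: sub_array_frieze p_gt0 A_diamond A_couples A_periodic i.
- exact: sub_array_translate p_gt0 A_periodic i i'.
Qed.
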